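(* Let $k$ be a field and let $X$ be a locally weakly quasi-compact topological space which has a countable covering $\{U_n\}_{n\in\mathbb{N}}$ by open sets with $U_n\subset\subset X$ for every $n$. Then the family of c-soft sheaves in $\mathrm{Mod}(k_X)$ is injective with respect to the functor $\Gamma(X;\bullet)$; that is: every sheaf admits a monomorphism into a c-soft sheaf; if $0\to F'\to F\to F''\to0$ is exact in $\mathrm{Mod}(k_X)$ with $F',F$ c-soft then $F''$ is c-soft; and if $0\to F'\to F\to F''\to0$ is exact with $F'$ c-soft then $0\to\Gamma(X;F')\to\Gamma(X;F)\to\Gamma(X;F'')\to0$ is exact.
   Context: For open subsets $V\subseteq U$ of a topological space $X$, write $V\subset\subset U$ (equivalently $U\supset\supset V$) if for every covering $\{U_i\}_{i\in I}$ of $U$ by open sets there is a finite $J\subseteq I$ with $V\subseteq\bigcup_{i\in J}U_i$; $\mathrm{Op}^c(U)$ is the set of such $V$. $X$ is locally weakly quasi-compact if for all open $U,V$: (LWC1) every $x\in U$ has a fundamental system of neighborhoods in $\mathrm{Op}^c(U)$; (LWC2) for $U'\in\mathrm{Op}^c(U)$, $V'\in\mathrm{Op}^c(V)$ one has $U'\cap V'\in\mathrm{Op}^c(U\cap V)$; (LWC3) for every $U'\in\mathrm{Op}^c(U)$ there is $W\in\mathrm{Op}^c(U)$ with $U'\subset\subset W$. $\mathrm{Mod}(k_X)$ is the category of sheaves of $k$-vector spaces on $X$. A sheaf $F$ on $X$ is c-soft if for all $V,W\in\mathrm{Op}^c(X)$ with $V\subset\subset W$ the restriction morphism $\Gamma(W;F)\to\varinjlim_{U\supset\supset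 V}\Gamma(U;F)$ (limit over open $U$ with $V\subset\subset U$) is surjective. *)

From HB Require Import structures.
From mathcomp Require Import all_boot all_algebra.
From mathcomp Require Import boolp classical_sets cardinality topology.
Set Implicit Arguments. Unset Strict Implicit. Unset Printing Implicit Defensive.
Import GRing.Theory.
Local Open Scope classical_set_scope.
Local Open Scope ring_scope.

Section Sheaves.
Variables (k : fieldType) (T : topologicalType).

Definition relcpt (V U : set T) : Prop :=
  open V /\ open U /\ V `<=` U /\
  forall (I : Type) (C : I -> set T), (forall i, open (C i)) ->
    U `<=` \bigcup_i C i ->
    exists J : set I, finite_set J /\ V `<=` \bigcup_(i in J) C i.

Definition locally_weakly_quasi_compact : Prop :=
  (forall U, open U -> forall x, U x -> forall N, nbhs x N ->
     exists V, relcpt V U /\ V x /\ V `<=` N) /\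
  (forall U V U' V', open U -> open V -> relcpt U' U -> relcpt V' V ->
     relcpt (U' `&` V') (U `&` V)) /\
  (forall U U', open U -> relcpt U' U -> exists W, relcpt W U /\ relcpt U' W).

(* Sections and restriction maps are
   given for all subsets, but only those on open sets (with V ⊆ U for
   restrictions) matter; all axioms are imposed only there. *)
Record presheaf := Presheaf {
  sec :> set T -> lmodType k;
  res : forall U V : set T, {linear sec U -> sec V};
  res_id : forall U, open U -> forall s : sec U, res U U s = s;
  res_comp : forall U V W, open U -> open V -> open W -> W `<=` V -> V `<=` U ->
    forall s : sec U, res V W (res U V s) = res U W s }.

Definition is_sheaf (F : presheaf) : Prop :=
  forall (U : set T) (I : Type) (C : I -> set T),
    open U -> (forall i, open (C i)) -> U = \bigcup_i C i ->
    (forall s : F U, (forall i, res F U (C i) s = 0) -> s = 0) /\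
    (forall s : forall i, F (C i),
       (forall i j, res F (C i) (C i `&` C j) (s i)
                    = res F (C j) (C i `&` C j) (s j)) ->
       exists t : F U, forall i, res F U (C i) t = s i).

Definition morphism (F G : presheaf) := forall U : set T, {linear F U -> G U}.

Definition natural (F G : presheaf) (phi : morphism F G) : Prop :=
  forall U V, open U -> open V -> V `<=` U ->
    forall s : F U, phi V (res F U V s) = res G U V (phi U s).

Definition mono (F G : presheaf) (phi : morphism F G) : Prop :=
  forall U, open U -> injective (phi U).

(* Exactness of 0 -> F' -f-> F -g-> F'' -> 0 in Mod(k_X):
   f injective (kernel sheaf is 0), g o f = 0, every section of ker g is
   locally in the image of f (ker g ⊆ im f as subsheaves), and g is locally
   surjective (im g = F'' as subsheaves). *)
Definition short_exact (F' F F'' : presheaf) (f : morphism F' F)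
    (g : morphism F F'') : Prop :=
  natural f /\ natural g /\
  (forall U, open U -> injective (f U)) /\
  (forall U, open U -> forall s : F' U, g U (f U s) = 0) /\
  (forall U, open U -> forall s : F U, g U s = 0 ->
     forall x, U x -> exists V, open V /\ V x /\ V `<=` U /\
       exists s' : F' V, f V s' = res F U V s) /\
  (forall U, open U -> forall s : F'' U, forall x, U x ->
     exists V, open V /\ V x /\ V `<=` U /\
       exists t : F V, g V t = res F'' U V s).

(* c-softness: for V ⊂⊂ W in Op^c(X), Γ(W;F) -> colim_{U ⊃⊃ V} Γ(U;F) is
   surjective; the colimit is directed (LWC2), so an element is a section s
   over some U ⊃⊃ V and two such agree iff they agree on some U' ⊃⊃ V. *)
Definition c_soft (F : presheaf) : Prop :=
  forall V W, relcpt V setT -> relcpt W setT -> relcpt V W ->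
    forall U (s : F U), relcpt V U ->
      exists (t : F W) (U' : set T), relcpt V U' /\ U' `<=` U `&` W /\
        res F W U' t = res F U U' s.

End Sheaves.

(* The Godement sheaf U |-> prod_(x in U) F_x has restrictions that extend by zero,
   so it is flabby, hence c-soft, and every sheaf embeds into it through germs.  Two local lifts to F of a
   section of F'' differ on their overlap by a section of F'; c-softness extends
   this difference from a neighbourhood of a relatively compact set, and after
   subtracting it the two lifts glue.  Finitely many such steps lift a section of
   F'' over any V ⊂⊂ U, which transfers c-softness from F to F''.  Along an
   exhaustion W_n ⊂⊂ W_(n+1) of X the same correction makes the lift over W_(n+2)
   agree on W_n with the one over W_(n+1), and these lifts glue to a global one. *)

From HB Require Import structures.
From mathcomp Require Import all_boot all_algebra.
From mathcomp Require Import boolp classical_sets cardinality topology.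
Import GRing.Theory.
Local Open Scope classical_set_scope.
Local Open Scope ring_scope.

Set Implicit Arguments. Unset Strict Implicit. Unset Printing Implicit Defensive.

Section DependentProduct.
Variables (k : fieldType) (I : Type) (A : I -> lmodType k).

Definition dprod := forall i, A i.
HB.instance Definition _ := Choice.on dprod.

Let dprod_add (f g : dprod) : dprod := fun i => f i + g i.
Let dprod_opp (f : dprod) : dprod := fun i => - f i.
Let dprod_scale (a : k) (f : dprod) : dprod := fun i => a *: f i.

Let dprod_addA : associative dprod_add.
Proof. by move=> f g h; apply: functional_extensionality_dep => i; exact: addrA. Qed.
Let dprod_addC : commutative dprod_add.
Proof. by move=> f g; apply: functional_extensionality_dep => i; exact: addrC. Qed.
Let dprod_add0 : left_id (fun i => 0) dprod_add.
Proof. by move=> f; apply: functional_extensionality_dep => i; exact: add0r. Qed.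
HB.instance Definition _ :=
  GRing.isNmodule.Build dprod dprod_addA dprod_addC dprod_add0.

Let dprod_addN : left_inverse (0 : dprod) dprod_opp dprod_add.
Proof. by move=> f; apply: functional_extensionality_dep => i; exact: addNr. Qed.
HB.instance Definition _ := GRing.Nmodule_isZmodule.Build dprod dprod_addN.

Let dprod_scaleA a b f : dprod_scale a (dprod_scale b f) = dprod_scale (a * b) f.
Proof. by apply: functional_extensionality_dep => i; exact: scalerA. Qed.
Let dprod_scale1 : left_id 1 dprod_scale.
Proof. by move=> f; apply: functional_extensionality_dep => i; exact: scale1r. Qed.
Let dprod_scaleDr : right_distributive dprod_scale +%R.
Proof. by move=> a f g; apply: functional_extensionality_dep => i; exact: scalerDr. Qed.
Let dprod_scaleDl f : {morph dprod_scale^~ f : a b / a + b}.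
Proof. by move=> a b; apply: functional_extensionality_dep => i; exact: scalerDl. Qed.
HB.instance Definition _ := GRing.Zmodule_isLmodule.Build k dprod
  dprod_scaleA dprod_scale1 dprod_scaleDr dprod_scaleDl.

End DependentProduct.

Section Stalk.
Variables (k : fieldType) (T : topologicalType) (F : presheaf k T) (x : T).

Record germ := Germ {
  germ_dom : set T;
  germ_dom_open : open germ_dom;
  germ_dom_pt : germ_dom x;
  germ_sec : F germ_dom }.

Definition germ_res (g : germ) W : F W := res F (germ_dom g) W (germ_sec g).

Definition same_germ (g h : germ) : Prop :=
  exists W, open W /\ W x /\ W `<=` germ_dom g `&` germ_dom h /\
    forall W', open W' -> W' `<=` W -> germ_res g W' = germ_res h W'.

Lemma germ_res_comp (g : germ) W W' : open W -> open W' -> W' `<=` W ->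
  W `<=` germ_dom g -> res F W W' (germ_res g W) = germ_res g W'.
Proof. by move=> oW oW' sW'W sW; rewrite /germ_res res_comp //; exact: germ_dom_open. Qed.

Lemma same_germ_dom (g h : germ) :
  (forall W, open W -> W `<=` germ_dom g `&` germ_dom h -> germ_res g W = germ_res h W) ->
  same_germ g h.
Proof.
move=> gh; exists (germ_dom g `&` germ_dom h).
split; first by apply: openI; exact: germ_dom_open.
split; first by split; exact: germ_dom_pt.
by split=> // W' oW' sW'; apply: gh.
Qed.

Lemma same_germ_refl g : same_germ g g.
Proof. exact: same_germ_dom. Qed.

Lemma same_germ_sym g h : same_germ g h -> same_germ h g.
Proof.
case=> W [oW [Wx [sW gh]]]; exists W; do 2!split=> //.
by split=> [y /sW[]|W' oW' sW']; [|rewrite gh].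
Qed.

Lemma same_germ_trans g h l : same_germ g h -> same_germ h l -> same_germ g l.
Proof.
case=> W [oW [Wx [sW gh]]] [W' [oW' [Wx' [sW' hl]]]].
exists (W `&` W'); split; first exact: openI.
split; first by [].
split=> [y [/sW[? _] /sW'[_ ?]] //|Z oZ sZ].
by rewrite gh ?hl // => y /sZ[].
Qed.

Definition stalk := {P : set germ | exists g, P = same_germ g}.
HB.instance Definition _ := gen_eqMixin stalk.
HB.instance Definition _ := gen_choiceMixin stalk.

Definition germ_class (g : germ) : stalk := exist _ (same_germ g) (ex_intro _ g erefl).
Definition germ_repr (P : stalk) : germ := projT1 (cid (proj2_sig P)).

Lemma germ_class_eq g h : germ_class g = germ_class h <-> same_germ g h.
Proof.
split=> [/(congr1 sval) /= ->|gh]; first exact: same_germ_refl.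
apply: eq_exist; apply/funext => l; apply/propext.
by split; apply: same_germ_trans; [apply: same_germ_sym|].
Qed.

Lemma germ_reprK P : germ_class (germ_repr P) = P.
Proof. by rewrite /germ_repr; case: cid => g /= e; case: P e => P pP /= e; exact: eq_exist. Qed.

Lemma germ_class_surj (P : stalk) : exists g, P = germ_class g.
Proof. by exists (germ_repr P); rewrite germ_reprK. Qed.

Definition germ_add (g h : germ) : germ :=
  @Germ (germ_dom g `&` germ_dom h) (openI (germ_dom_open g) (germ_dom_open h))
    (conj (germ_dom_pt g) (germ_dom_pt h)) (germ_res g _ + germ_res h _).
Definition germ_opp (g : germ) : germ :=
  @Germ (germ_dom g) (germ_dom_open g) (germ_dom_pt g) (- germ_sec g).
Definition germ_scale (a : k) (g : germ) : germ :=
  @Germ (germ_dom g) (germ_dom_open g) (germ_dom_pt g) (a *: germ_sec g).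
Definition germ_zero : germ := @Germ setT openT I 0.

Lemma germ_res_add g h W : open W -> W `<=` germ_dom g `&` germ_dom h ->
  germ_res (germ_add g h) W = germ_res g W + germ_res h W.
Proof.
move=> oW sW; have oI := openI (germ_dom_open g) (germ_dom_open h).
by rewrite [LHS]/germ_res /= linearD !germ_res_comp // => y [].
Qed.

Lemma germ_res_opp g W : germ_res (germ_opp g) W = - germ_res g W.
Proof. exact: linearN. Qed.

Lemma germ_res_scale a g W : germ_res (germ_scale a g) W = a *: germ_res g W.
Proof. exact: linearZ. Qed.

Lemma germ_res_zero W : germ_res germ_zero W = 0.
Proof. exact: linear0. Qed.

Lemma same_germ_add g g' h h' :
  same_germ g g' -> same_germ h h' -> same_germ (germ_add g h) (germ_add g' h').
Proof.
case=> W [oW [Wx [sW gg']]] [W' [oW' [Wx' [sW' hh']]]].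
exists (W `&` W'); split; first exact: openI.
split; first by [].
split=> [y [/sW[? ?] /sW'[? ?]] //|Z oZ sZ].
have [sZW sZW'] : Z `<=` W /\ Z `<=` W' by split=> y /sZ[].
by rewrite !germ_res_add ?gg' ?hh' // => y /sZ[/sW[? ?] /sW'[? ?]].
Qed.

Lemma same_germ_opp g g' : same_germ g g' -> same_germ (germ_opp g) (germ_opp g').
Proof.
case=> W [oW [Wx [sW gg']]]; exists W; do 3!split=> //.
by move=> W' oW' sW'; rewrite !germ_res_opp gg'.
Qed.

Lemma same_germ_scale a g g' : same_germ g g' -> same_germ (germ_scale a g) (germ_scale a g').
Proof.
case=> W [oW [Wx [sW gg']]]; exists W; do 3!split=> //.
by move=> W' oW' sW'; rewrite !germ_res_scale gg'.
Qed.

Definition stalk_add (P Q : stalk) := germ_class (germ_add (germ_repr P) (germ_repr Q)).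
Definition stalk_opp (P : stalk) := germ_class (germ_opp (germ_repr P)).
Definition stalk_scale a (P : stalk) := germ_class (germ_scale a (germ_repr P)).

Lemma same_germ_repr g : same_germ (germ_repr (germ_class g)) g.
Proof. by apply/germ_class_eq; rewrite germ_reprK. Qed.

Lemma stalk_add_class g h : stalk_add (germ_class g) (germ_class h) = germ_class (germ_add g h).
Proof. by apply/germ_class_eq; apply: same_germ_add; exact: same_germ_repr. Qed.
Lemma stalk_opp_class g : stalk_opp (germ_class g) = germ_class (germ_opp g).
Proof. by apply/germ_class_eq; apply: same_germ_opp; exact: same_germ_repr. Qed.
Lemma stalk_scale_class a g : stalk_scale a (germ_class g) = germ_class (germ_scale a g).
Proof. by apply/germ_class_eq; apply: same_germ_scale; exact: same_germ_repr. Qed.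

Let stalk_addA : associative stalk_add.
Proof.
move=> P Q R; have [g ->] := germ_class_surj P; have [h ->] := germ_class_surj Q.
have [l ->] := germ_class_surj R.
rewrite !stalk_add_class; apply/germ_class_eq/same_germ_dom => W oW sW.
by rewrite !germ_res_add ?addrA // => y /sW /=; tauto.
Qed.

Let stalk_addC : commutative stalk_add.
Proof.
move=> P Q; have [g ->] := germ_class_surj P; have [h ->] := germ_class_surj Q.
rewrite !stalk_add_class; apply/germ_class_eq/same_germ_dom => W oW sW.
by rewrite !germ_res_add 1?addrC // => y /sW /=; tauto.
Qed.

Let stalk_add0 : left_id (germ_class germ_zero) stalk_add.
Proof.
move=> P; have [g ->] := germ_class_surj P.
rewrite stalk_add_class; apply/germ_class_eq/same_germ_dom => W oW sW.
by rewrite germ_res_add ?germ_res_zero ?add0r // => y /sW /=; tauto.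
Qed.

HB.instance Definition _ := GRing.isNmodule.Build stalk stalk_addA stalk_addC stalk_add0.

Let stalk_addN : left_inverse (0 : stalk) stalk_opp stalk_add.
Proof.
move=> P; have [g ->] := germ_class_surj P.
rewrite stalk_opp_class stalk_add_class; apply/germ_class_eq/same_germ_dom => W oW sW.
by rewrite germ_res_add ?germ_res_opp ?germ_res_zero ?addNr // => y /sW /=; tauto.
Qed.

HB.instance Definition _ := GRing.Nmodule_isZmodule.Build stalk stalk_addN.

Let stalk_scaleA a b P : stalk_scale a (stalk_scale b P) = stalk_scale (a * b) P.
Proof.
have [g ->] := germ_class_surj P.
rewrite !stalk_scale_class; apply/germ_class_eq/same_germ_dom => W oW sW.
by rewrite !germ_res_scale scalerA.
Qed.

Let stalk_scale1 : left_id 1 stalk_scale.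
Proof.
move=> P; have [g ->] := germ_class_surj P.
rewrite stalk_scale_class; apply/germ_class_eq/same_germ_dom => W oW sW.
by rewrite germ_res_scale scale1r.
Qed.

Let stalk_scaleDr : right_distributive stalk_scale stalk_add.
Proof.
move=> a P Q; have [g ->] := germ_class_surj P; have [h ->] := germ_class_surj Q.
rewrite !(stalk_add_class, stalk_scale_class); apply/germ_class_eq/same_germ_dom => W oW sW.
by rewrite germ_res_scale !germ_res_add ?germ_res_scale ?scalerDr // => y /sW /=; tauto.
Qed.

Let stalk_scaleDl P : {morph stalk_scale^~ P : a b / a + b >-> stalk_add a b}.
Proof.
move=> a b; have [g ->] := germ_class_surj P.
rewrite !(stalk_add_class, stalk_scale_class); apply/germ_class_eq/same_germ_dom => W oW sW.
by rewrite germ_res_add ?germ_res_scale ?scalerDl // => y /sW /=; tauto.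
Qed.

HB.instance Definition _ := GRing.Zmodule_isLmodule.Build k stalk
  stalk_scaleA stalk_scale1 stalk_scaleDr stalk_scaleDl.

End Stalk.

Section RelativelyCompact.
Variable T : topologicalType.
Implicit Types U V W : set T.

Lemma relcpt_openl V U : relcpt V U -> open V. Proof. by case. Qed.
Lemma relcpt_openr V U : relcpt V U -> open U. Proof. by case=> _ []. Qed.
Lemma relcpt_subset V U : relcpt V U -> V `<=` U. Proof. by case=> _ [_ []]. Qed.

Lemma relcptWr V U W : relcpt V U -> open W -> U `<=` W -> relcpt V W.
Proof.
move=> [oV [oU [sVU cpt]]] oW sUW; do 2!split=> //; split=> [y /sVU /sUW //|].
by move=> I C oC cov; apply: cpt => // y /sUW /cov.
Qed.

Lemma relcptWl V W U : relcpt V U -> open W -> W `<=` V -> relcpt W U.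
Proof.
move=> [oV [oU [sVU cpt]]] oW sWV; do 2!split=> //; split=> [y /sWV /sVU //|].
move=> I C oC cov; have [J [fJ sVJ]] := cpt I C oC cov.
by exists J; split=> // y /sWV /sVJ.
Qed.

Lemma relcpt_set0 U : open U -> relcpt set0 U.
Proof.
move=> oU; split; first exact: open0.
split=> //; split; first exact: sub0set.
by move=> I C _ _; exists set0; split.
Qed.

Lemma relcpt_setU V1 U1 V2 U2 :
  relcpt V1 U1 -> relcpt V2 U2 -> relcpt (V1 `|` V2) (U1 `|` U2).
Proof.
move=> [oV1 [oU1 [s1 cpt1]]] [oV2 [oU2 [s2 cpt2]]].
split; first exact: openU.
split; first exact: openU.
split=> [y [/s1|/s2]|I C oC cov]; [by left|by right|].
have [J1 [fJ1 c1]] := cpt1 I C oC (fun y h => cov y (or_introl h)).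
have [J2 [fJ2 c2]] := cpt2 I C oC (fun y h => cov y (or_intror h)).
exists (J1 `|` J2); split; first by rewrite finite_setU.
by move=> y [/c1|/c2] [i Ji Ci]; exists i => //; [left|right].
Qed.

Lemma relcpt_finite_subcover V U (I : Type) (C : I -> set T) :
  relcpt V U -> (forall i, open (C i)) -> U `<=` \bigcup_i C i ->
  exists s : seq {classic I}, forall y, V y -> exists2 i, i \in s & C i y.
Proof.
move=> [_ [_ [_ cpt]]] oC cov; have [J [fJ sVJ]] := cpt I C oC cov.
have /finite_seqP [s Js] := (fJ : @finite_set {classic I} J).
by exists s => y /sVJ [i Ji Ci]; exists i => //; move: Ji; rewrite Js.
Qed.

Section LocallyWeaklyQuasiCompact.
Hypothesis LW : locally_weakly_quasi_compact T.

Lemma lwqc_nbhs U x N : open U -> U x -> nbhs x N ->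
  exists V, relcpt V U /\ V x /\ V `<=` N.
Proof. by move=> oU Ux Nx; case: LW => LW1 _; exact: LW1 oU x Ux N Nx. Qed.

Lemma lwqc_relcptI U V U' V' : open U -> open V -> relcpt U' U -> relcpt V' V ->
  relcpt (U' `&` V') (U `&` V).
Proof. by case: LW => _ [LW2 _]; exact: LW2. Qed.

Lemma lwqc_interpolate U V : open U -> relcpt V U -> exists W, relcpt W U /\ relcpt V W.
Proof. by case: LW => _ [_ LW3]; exact: LW3. Qed.

Lemma relcpt_setI V U W : relcpt V U -> relcpt V W -> relcpt V (U `&` W).
Proof.
move=> VU VW; rewrite -[V]setIid.
exact: lwqc_relcptI (relcpt_openr VU) (relcpt_openr VW) VU VW.
Qed.

End LocallyWeaklyQuasiCompact.
End RelativelyCompact.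

Section SheafLemmas.
Variables (k : fieldType) (T : topologicalType) (G : presheaf k T).
Hypothesis shG : is_sheaf G.

Lemma sheaf_eq_cover U (I : Type) (C : I -> set T) (s t : G U) :
  open U -> (forall i, open (C i)) -> U = \bigcup_i C i ->
  (forall i, res G U (C i) s = res G U (C i) t) -> s = t.
Proof.
move=> oU oC UC st; apply/eqP; rewrite -subr_eq0; apply/eqP.
have [zero _] := shG oU oC UC; apply: zero => i.
by rewrite linearB /= st subrr.
Qed.

Lemma sheaf_set0 (s t : G set0) : s = t.
Proof.
apply: (@sheaf_eq_cover _ False (fun _ => set0)) => //; first exact: open0.
by rewrite bigcup0.
Qed.

Let cover2 (A B : set T) (b : bool) := if b then A else B.

Let cover2E A B : A `|` B = \bigcup_b cover2 A B b.
Proof.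
apply/seteqP; split=> [y [Ay|By]|y [[] _ ?]]; by [exists true|exists false|left|right].
Qed.

Lemma sheaf_eq_setU A B (s t : G (A `|` B)) : open A -> open B ->
  res G _ A s = res G _ A t -> res G _ B s = res G _ B t -> s = t.
Proof.
move=> oA oB sA sB; apply: (sheaf_eq_cover (C := cover2 A B)) (cover2E A B) _ => //.
- exact: openU.
- by case.
- by case.
Qed.

Lemma sheaf_glue_setU A B (a : G A) (b : G B) : open A -> open B ->
  res G A (A `&` B) a = res G B (A `&` B) b ->
  exists s : G (A `|` B), res G _ A s = a /\ res G _ B s = b.
Proof.
move=> oA oB ab.
have oAB := openI oA oB; have oBA := openI oB oA.
have sBA : B `&` A `<=` A `&` B by move=> y [].
have oC : forall i, open (cover2 A B i) by case.
have [_ glue] := shG (openU oA oB) oC (cover2E A B).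
pose ab' i : G (cover2 A B i) := if i as i0 return G (cover2 A B i0) then a else b.
have [s hs] : exists s : G (A `|` B), forall i, res G _ (cover2 A B i) s = ab' i.
  apply: glue; case=> [] [] //=.
  rewrite -(res_comp oA oAB oBA sBA) -?(res_comp oB oAB oBA sBA) ?ab //; by move=> y [].
by exists s; split; [exact: (hs true)|exact: (hs false)].
Qed.

End SheafLemmas.

Lemma local_open_cover (T : topologicalType) (U : set T) (P : set T -> Prop) :
  (forall x, U x -> exists W, open W /\ W x /\ W `<=` U /\ P W) ->
  exists C : {x | U x} -> set T,
    [/\ forall p, open (C p), U = \bigcup_p C p & forall p, P (C p)].
Proof.
move=> loc; pose C p := sval (cid (loc _ (proj2_sig p))).
have hC p : open (C p) /\ sval p \in C p /\ C p `<=` U /\ P (C p).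
  by rewrite inE; exact: proj2_sig (cid (loc _ (proj2_sig p))).
exists C; split=> [p||p]; try by case: (hC p) => [? [? [? ?]]].
apply/seteqP; split=> [y Uy|y [p _ /(proj1 (proj2 (proj2 (hC p))))] //].
by exists (exist _ y Uy) => //; case: (hC (exist _ y Uy)) => _ [/set_mem].
Qed.

Section Godement.
Variables (k : fieldType) (T : topologicalType) (F : presheaf k T).

Definition godement_sec (U : set T) : lmodType k :=
  dprod (fun p : {x : T | U x} => stalk F (sval p)).

(* [res] must be defined for all pairs of subsets: sections are extended by zero. *)
Definition godement_res U V (s : godement_sec U) : godement_sec V := fun p =>
  if pselect (U (sval p)) is left Up then s (exist _ (sval p) Up) else 0.
Arguments godement_res : clear implicits.

Lemma godement_res_is_linear U V : linear (godement_res U V).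
Proof.
move=> a s t; apply: functional_extensionality_dep => p.
rewrite [RHS](_ : _ = a *: godement_res U V s p + godement_res U V t p) //.
by rewrite /godement_res; case: pselect => [//|nUp]; rewrite scaler0 addr0.
Qed.

HB.instance Definition _ U V := GRing.isLinear.Build k (godement_sec U) (godement_sec V)
  *:%R (godement_res U V) (@godement_res_is_linear U V).

Lemma godement_res_id U (s : godement_sec U) : godement_res U U s = s.
Proof.
apply: functional_extensionality_dep => -[y Uy]; rewrite /godement_res /=.
by case: pselect => // Uy'; rewrite (Prop_irrelevance Uy' Uy).
Qed.

Lemma godement_res_comp U V W (s : godement_sec U) : W `<=` V ->
  godement_res V W (godement_res U V s) = godement_res U W s.
Proof.
move=> sWV; apply: functional_extensionality_dep => -[y Wy]; rewrite /godement_res /=.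
by case: pselect => // /(_ (sWV _ Wy)).
Qed.

Definition godement : presheaf k T :=
  @Presheaf k T godement_sec (fun U V => godement_res U V) (fun U _ => @godement_res_id U)
    (fun U V W _ _ _ sWV _ s => godement_res_comp s sWV).

Lemma godement_sheaf : is_sheaf godement.
Proof.
move=> U I C oU oC UC; split=> [s s0|s compat].
  apply: functional_extensionality_dep => -[y Uy].
  have [i _ Ciy] : (\bigcup_i C i) y by rewrite -UC.
  have := congr1 (fun t : godement_sec (C i) => t (exist _ y Ciy)) (s0 i).
  rewrite /= /godement_res /=; case: pselect => // Uy'.
  by rewrite (Prop_irrelevance Uy' Uy).
have pick_index (p : {y | U y}) : {i | C i (sval p)}.
  by apply: cid; case: p => y /=; rewrite {1}UC => -[i _ Ciy]; exists i.
exists (fun p => s _ (exist _ (sval p) (proj2_sig (pick_index p)))) => i.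
apply: functional_extensionality_dep => -[y Ciy]; rewrite /= /godement_res /=.
case: pselect => [Uy|]; last by rewrite UC; case; exists i.
case: (pick_index _) => j Cjy /=.
have := congr1 (fun t : godement_sec (C j `&` C i) => t (exist _ y (conj Cjy Ciy))) (compat j i).
rewrite /= /godement_res /=; case: pselect => [Cjy'|//]; case: pselect => [Ciy'|//].
by rewrite (Prop_irrelevance Cjy' Cjy) (Prop_irrelevance Ciy' Ciy).
Qed.

(** The Godement sheaf is flabby, so it is c-soft. *)
Lemma godement_c_soft : locally_weakly_quasi_compact T -> c_soft godement.
Proof.
move=> LW V W _ _ VW U s VU.
exists (godement_res U W s), (U `&` W); split; first exact: relcpt_setI.
by split=> //=; rewrite godement_res_comp // => y [].
Qed.

Definition germ_map U (s : F U) : godement_sec U := fun p =>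
  if pselect (open U) is left oU then germ_class (Germ oU (proj2_sig p) s) else 0.

Lemma germ_res_Germ y U (oU : open U) (Uy : U y) (s : F U) W :
  germ_res (Germ oU Uy s) W = res F U W s.
Proof. by []. Qed.

Lemma germ_map_is_linear U : linear (@germ_map U).
Proof.
move=> a s t; apply: functional_extensionality_dep => p.
rewrite [RHS](_ : _ = a *: germ_map s p + germ_map t p) //.
rewrite /germ_map; case: pselect => oU; last by rewrite scaler0 addr0.
rewrite -[a *: germ_class _]/(stalk_scale _ _) stalk_scale_class.
rewrite -[_ + germ_class _]/(stalk_add _ _) stalk_add_class.
apply/germ_class_eq/same_germ_dom => W oW sW.
rewrite germ_res_add // ?germ_res_scale; last by move=> z /sW[].
by rewrite !germ_res_Germ linearP.
Qed.

HB.instance Definition _ U := GRing.isLinear.Build k (F U) (godement_sec U)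
  *:%R (@germ_map U) (@germ_map_is_linear U).

Definition germ_morphism : morphism F godement := fun U => @germ_map U.

Lemma germ_morphism_natural : natural germ_morphism.
Proof.
move=> U V oU oV sVU s; apply: functional_extensionality_dep => -[y Vy].
rewrite /= /germ_map /godement_res /=.
case: pselect => // oV'; case: pselect => [Uy|]; last by case; exact: sVU.
case: pselect => // oU'; apply/germ_class_eq/same_germ_dom => W oW sW.
by rewrite !germ_res_Germ res_comp // => z /sW[].
Qed.

Lemma germ_morphism_mono : is_sheaf F -> mono germ_morphism.
Proof.
move=> shF U oU; apply: raddf_inj => s s0.
have loc x : U x -> exists W, open W /\ W x /\ W `<=` U /\ res F U W s = 0.
  move=> Ux; have := congr1 (fun t : godement_sec U => t (exist _ x Ux)) s0.
  rewrite /= /germ_map; case: pselect => // oU' /germ_class_eq [W [oW [Wx [sW s0W]]]].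
  exists W; do 3!split=> //; first by move=> y /sW[].
  by rewrite -(@germ_res_zero _ _ F x W); exact: s0W.
have [C [oC UC CP]] := local_open_cover loc.
by apply: (sheaf_eq_cover shF oU oC UC) => p; rewrite CP linear0.
Qed.

End Godement.

Section Exhaustion.
Variable T : topologicalType.
Hypothesis LW : locally_weakly_quasi_compact T.
Variable U : nat -> set T.
Hypothesis UX : forall n, relcpt (U n) setT.

Let exhaustion_step (A : {A : set T | relcpt A setT}) n :
  {B | relcpt B setT /\ relcpt (sval A `|` U n) B}.
Proof.
apply: cid; case: A => A AX /=.
have AUX : relcpt (A `|` U n) setT by rewrite -[setT]setUid; exact: relcpt_setU.
by have [B [BX AUB]] := lwqc_interpolate LW openT AUX; exists B.
Qed.

Fixpoint exhaustion n : {A : set T | relcpt A setT} :=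
  if n is m.+1 then
    let B := exhaustion_step (exhaustion m) m in exist _ (sval B) (proj1 (proj2_sig B))
  else exist _ set0 (relcpt_set0 openT).

Lemma exhaustion_relcpt n : relcpt (sval (exhaustion n) `|` U n) (sval (exhaustion n.+1)).
Proof. by rewrite /=; case: exhaustion_step => B []. Qed.

End Exhaustion.

Lemma relcpt_exhaustion (T : topologicalType) (U : nat -> set T) :
  locally_weakly_quasi_compact T -> (forall n, relcpt (U n) setT) -> \bigcup_n U n = setT ->
  exists W : nat -> set T,
    [/\ forall n, relcpt (W n) setT, forall n, relcpt (W n) (W n.+1) & \bigcup_n W n = setT].
Proof.
move=> LW UX covU; exists (fun n => sval (exhaustion LW UX n)); split.
- move=> n; exact: (proj2_sig (exhaustion LW UX n)).
- move=> n; apply: relcptWl (exhaustion_relcpt LW UX n) _ (@subsetUl _ _ _).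
  exact: relcpt_openl (proj2_sig (exhaustion LW UX n)).
- apply/seteqP; split=> // y _; have [n _ Uny] : (\bigcup_n U n) y by rewrite covU.
  by exists n.+1 => //; apply: relcpt_subset (exhaustion_relcpt LW UX n) _ _; right.
Qed.

Section ShortExact.
Variables (k : fieldType) (T : topologicalType).
Variables (F' F F'' : presheaf k T) (f : morphism F' F) (g : morphism F F'').
Hypotheses (shF' : is_sheaf F') (shF : is_sheaf F) (shF'' : is_sheaf F'').
Hypothesis fg_exact : short_exact f g.

Lemma f_res U V (s : F' U) : open U -> open V -> V `<=` U ->
  f V (res F' U V s) = res F U V (f U s).
Proof. by move=> oU oV sVU; case: fg_exact => natf _; exact: natf. Qed.

Lemma g_res U V (s : F U) : open U -> open V -> V `<=` U ->
  g V (res F U V s) = res F'' U V (g U s).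
Proof. by move=> oU oV sVU; case: fg_exact => _ [natg _]; exact: natg. Qed.

Lemma f_inj U : open U -> injective (f U).
Proof. by case: fg_exact => _ [_ [inj _]]; exact: inj. Qed.

Lemma gf_eq0 U (s : F' U) : open U -> g U (f U s) = 0.
Proof. by move=> oU; case: fg_exact => _ [_ [_ [gf0 _]]]; exact: gf0. Qed.

Lemma g_surj_local U (u : F'' U) x : open U -> U x ->
  exists V, open V /\ V x /\ V `<=` U /\ exists t : F V, g V t = res F'' U V u.
Proof. by move=> oU Ux; case: fg_exact => _ [_ [_ [_ [_ surj]]]]; exact: surj. Qed.

Lemma ker_g_im_f U (s : F U) : open U -> g U s = 0 -> exists c : F' U, f U c = s.
Proof.
move=> oU gs0.
have [C [oC UC lift]] : exists C : {x | U x} -> set T,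
    [/\ forall p, open (C p), U = \bigcup_p C p &
        forall p, exists c : F' (C p), f (C p) c = res F U (C p) s].
  apply: (local_open_cover (P := fun W => exists c : F' W, f W c = res F U W s)).
  by move=> x Ux; case: fg_exact => _ [_ [_ [_ [ker _]]]]; exact: ker.
have [c' fc'] : exists c' : forall p, F' (C p), forall p, f (C p) (c' p) = res F U (C p) s.
  by exists (fun p => sval (cid (lift p))) => p; exact: proj2_sig (cid (lift p)).
have sC p : C p `<=` U by rewrite UC => y Cy; exists p.
have [_ glue] := shF' oU oC UC.
have [c hc] : exists c : F' U, forall p, res F' U (C p) c = c' p.
  apply: glue => p q; have oI := openI (oC p) (oC q).
  apply: (f_inj oI); rewrite !f_res ?fc' ?res_comp //; by move=> y [/sC].
by exists c; apply: (sheaf_eq_cover shF oU oC UC) => p; rewrite -f_res // hc fc'.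
Qed.

Definition liftable U (u : F'' U) (P : set T) :=
  P `<=` U /\ exists t : F P, g P t = res F'' U P u.

Hypothesis LW : locally_weakly_quasi_compact T.
Hypothesis csF' : c_soft F'.

(* Two lifts differ on [P `&` O] by a section of [F']; c-softness extends it
   from a neighborhood of [Z] to [M], and subtracting it makes the lift on [P]
   agree with the one on [O] over [Z]. *)
Lemma lift_correction P O M Z (a : F P) (b : F O) :
  open O -> relcpt M P -> relcpt Z (P `&` O) -> relcpt Z M ->
  g (P `&` O) (res F P (P `&` O) a) = g (P `&` O) (res F O (P `&` O) b) ->
  exists a' : F M, g M a' = g M (res F P M a) /\ res F M Z a' = res F O Z b.
Proof.
move=> oO MP ZPO ZM gab.
have oP := relcpt_openr MP; have oM := relcpt_openl MP; have oZ := relcpt_openl ZM.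
have oPO := relcpt_openr ZPO; have sZM := relcpt_subset ZM.
have [sPOP sPOO] : P `&` O `<=` P /\ P `&` O `<=` O by split=> y [].
have [c fc] : exists c : F' (P `&` O), f _ c = res F P _ a - res F O _ b.
  by apply: ker_g_im_f => //; rewrite linearB /= gab subrr.
have ZX := relcptWr ZM openT (@subsetT _ M).
have MX := relcptWr MP openT (@subsetT _ P).
have [d [U' [ZU' [sU' dc]]]] := csF' ZX MX ZM c ZPO.
have oU' := relcpt_openr ZU'; have sZU' := relcpt_subset ZU'.
have [sU'PO sU'M] : U' `<=` P `&` O /\ U' `<=` M by split=> y /sU'[].
have sZPO : Z `<=` P `&` O by move=> y /sZU' /sU'PO.
exists (res F P M a - f M d); split; first by rewrite linearB /= gf_eq0 // subr0.
have fdZ : res F M Z (f M d) = res F P Z a - res F O Z b.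
  rewrite -f_res // -(res_comp oM oU' oZ sZU' sU'M) dc res_comp //.
  by rewrite f_res // fc linearB /= !res_comp.
have sMP := relcpt_subset MP.
by rewrite linearB /= fdZ res_comp // opprB addrC subrK.
Qed.

Lemma liftable_relcptU U (u : F'' U) M P N O :
  open U -> relcpt M P -> liftable u P -> relcpt N O -> liftable u O ->
  exists Q, relcpt (M `|` N) Q /\ liftable u Q.
Proof.
move=> oU MP [sPU [a ga]] NO [sOU [b gb]].
have oP := relcpt_openr MP; have oO := relcpt_openr NO.
have [M2 [M2P MM2]] := lwqc_interpolate LW oP MP.
have [M1 [M1M2 MM1]] := lwqc_interpolate LW (relcpt_openl M2P) MM2.
have [N1 [N1O NN1]] := lwqc_interpolate LW oO NO.
have oM1 := relcpt_openl M1M2; have oM2 := relcpt_openl M2P; have oN1 := relcpt_openl N1O.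
have sM1M2 := relcpt_subset M1M2; have sM2P := relcpt_subset M2P.
have sN1O := relcpt_subset N1O.
have oPO := openI oP oO; have oMN := openI oM1 oN1; have oQ := openU oM1 oN1.
have [sMN1 sMN2] : M1 `&` N1 `<=` M1 /\ M1 `&` N1 `<=` N1 by split=> y [].
have gab : g (P `&` O) (res F P _ a) = g (P `&` O) (res F O _ b).
  by rewrite !g_res ?ga ?gb ?res_comp // => y [] // /sPU.
have MNPO := lwqc_relcptI LW oP oO (relcptWr M1M2 oP sM2P) N1O.
have [a' [ga' a'b]] := lift_correction oO M2P MNPO (relcptWl M1M2 oMN sMN1) gab.
have [s [sM1 sN1]] : exists s : F (M1 `|` N1),
    res F _ M1 s = res F M2 M1 a' /\ res F _ N1 s = res F O N1 b.
  by apply: sheaf_glue_setU => //; rewrite !res_comp.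
have [sM1U sN1U] : M1 `<=` U /\ N1 `<=` U by split=> y; [move/sM1M2/sM2P/sPU|move/sN1O/sOU].
have sQU : M1 `|` N1 `<=` U by move=> y [/sM1U|/sN1U].
exists (M1 `|` N1); split; first exact: relcpt_setU.
split=> //; exists s; apply: (sheaf_eq_setU shF'') => //.
  rewrite -g_res ?subsetUl // sM1 g_res // ga' g_res // ga !res_comp //.
  by move=> y /sM1M2 /sM2P.
by rewrite -g_res ?subsetUr // sN1 g_res // gb !res_comp.
Qed.


Lemma liftable_near U (u : F'' U) V : relcpt V U -> exists O, relcpt V O /\ liftable u O.
Proof.
move=> VU; have oU := relcpt_openr VU; have oV := relcpt_openl VU.
have [V2 [V2U VV2]] := lwqc_interpolate LW oU VU.
have oV2 := relcpt_openl V2U; have sV2U := relcpt_subset V2U.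
have local (p : {y | V2 y}) : exists NO : set T * set T,
    [/\ NO.1 (sval p), relcpt NO.1 NO.2 & liftable u NO.2].
  case: p => y /= V2y.
  have [O [oO [Oy [sOU lift]]]] := g_surj_local u oU (sV2U _ V2y).
  have oOV2 := openI oO oV2.
  have [N [NOV2 [Ny _]]] := lwqc_nbhs LW oOV2 (conj Oy V2y) (open_nbhs_nbhs (conj oOV2 (conj Oy V2y))).
  by exists (N, O); split=> //; apply: (relcptWr NOV2 oO) => z [].
have [NO hNO] := choice local.
pose N p := (NO p).1; pose O p := (NO p).2.
have NO_relcpt p : relcpt (N p) (O p) by case: (hNO p).
have O_liftable p : liftable u (O p) by case: (hNO p).
have cov : V2 `<=` \bigcup_p N p.
  by move=> y V2y; exists (exist _ y V2y) => //; case: (hNO (exist _ y V2y)).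
have [l Nl] := relcpt_finite_subcover VV2 (fun p => relcpt_openl (NO_relcpt p)) cov.
have [W [Q [WQ Qu NW]]] : exists W Q, [/\ relcpt W Q, liftable u Q &
    forall i, i \in l -> N i `<=` W].
  elim: l {Nl} => [|i l [W [Q [WQ Qu NW]]]].
    exists set0, set0; split=> //; first exact: relcpt_set0 open0.
    by split; [exact: sub0set|exists 0; exact: sheaf_set0].
  have [Q' [WQ' Q'u]] := liftable_relcptU oU WQ Qu (NO_relcpt i) (O_liftable i).
  exists (W `|` N i), Q'; split=> // j; rewrite in_cons => /orP [/eqP ->|/NW sNW].
    exact: subsetUr.
  by move=> y /sNW; left.
exists Q; split=> //; apply: (relcptWl WQ oV) => y /Nl [i li Niy].
exact: NW i li y Niy.
Qed.

Lemma c_soft_quotient : c_soft F -> c_soft F''.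
Proof.
move=> csF V W VX WX VW U u VU.
have [O [VO [sOU [t gt]]]] := liftable_near u VU.
have [t' [U' [VU' [sU' t't]]]] := csF V W VX WX VW O t VO.
have oU := relcpt_openr VU; have oO := relcpt_openr VO.
have oW := relcpt_openr VW; have oU' := relcpt_openr VU'.
have [sU'O sU'W] : U' `<=` O /\ U' `<=` W by split=> y /sU'[].
exists (g W t'), U'; split=> //; split; first by move=> y /sU'[/sOU].
by rewrite -g_res // t't g_res // gt res_comp.
Qed.

Section GlobalSections.
Variable W : nat -> set T.
Hypotheses (WX : forall n, relcpt (W n) setT) (WW : forall n, relcpt (W n) (W n.+1)).
Hypothesis covW : \bigcup_n W n = setT.
Variable u : F'' setT.

Let oX : open [set: T] := openT.
Let oW n : open (W n) := relcpt_openl (WX n).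
Let sW n : W n `<=` W n.+1 := relcpt_subset (WW n).
Let subW m n : (m <= n)%N -> W m `<=` W n.
Proof. exact: (homo_leq (@subset_refl _) (fun B A C => @subset_trans _ B A C) sW). Qed.

Lemma lift_exhaustion n : exists t : F (W n), g (W n) t = res F'' setT (W n) u.
Proof.
have [O [WO [_ [t gt]]]] := liftable_near u (WX n).
have oO := relcpt_openr WO; have sWO := relcpt_subset WO.
by exists (res F O (W n) t); rewrite g_res // gt res_comp.
Qed.

Lemma lift_exhaustion_succ n (t : F (W n.+1)) : g _ t = res F'' setT _ u ->
  exists t' : F (W n.+2), g _ t' = res F'' setT _ u /\ res F _ (W n) t' = res F _ (W n) t.
Proof.
move=> gt; have [b gb] := lift_exhaustion n.+3.
have W02 : relcpt (W n) (W n.+2) := relcptWr (WW n) (@oW _) (@sW n.+1).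
have W03 : relcpt (W n) (W n.+3) := relcptWr W02 (@oW _) (@sW n.+2).
have oI := openI (@oW n.+3) (@oW n.+1).
have [sI3 sI1] : W n.+3 `&` W n.+1 `<=` W n.+3 /\ W n.+3 `&` W n.+1 `<=` W n.+1.
  by split=> y [].
have gbt : g _ (res F _ (W n.+3 `&` W n.+1) b) = g _ (res F _ (W n.+3 `&` W n.+1) t).
  by rewrite !g_res // gb gt !res_comp.
have [t' [gt' t't]] := lift_correction (@oW n.+1) (WW n.+2) (relcpt_setI LW W03 (WW n)) W02 gbt.
exists t'; split=> //.
by rewrite gt' g_res // gb res_comp // => y /(@sW n.+1) /(@sW n.+2).
Qed.

Fixpoint lifts n : {t : F (W n.+1) | g _ t = res F'' setT _ u} :=
  if n is m.+1 then
    let t := cid (lift_exhaustion_succ (proj2_sig (lifts m))) in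
    exist _ (sval t) (proj1 (proj2_sig t))
  else cid (lift_exhaustion 1).

Definition glued n : F (W n) := res F (W n.+1) (W n) (sval (lifts n)).

Lemma glued_succ n : res F (W n.+1) (W n) (glued n.+1) = glued n.
Proof.
have s02 : W n `<=` W n.+2 by move=> y /(@sW n) /(@sW n.+1).
rewrite /glued res_comp //=.
by case: cid => t [_ ->].
Qed.

Lemma glued_res m n : (m <= n)%N -> res F (W n) (W m) (glued n) = glued m.
Proof.
elim: n => [|n IH]; first by rewrite leqn0 => /eqP ->; rewrite res_id.
rewrite leq_eqVlt ltnS => /predU1P [-> | lemn]; first by rewrite res_id.
by rewrite -(res_comp (@oW n.+1) (@oW n) (@oW m) (subW lemn) (@sW n)) glued_succ IH.
Qed.

Lemma glued_compat i j :
  res F (W i) (W i `&` W j) (glued i) = res F (W j) (W i `&` W j) (glued j).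
Proof.
have oI := openI (@oW i) (@oW j).
case: (leqP i j) => [/[dup] ij /subW sWij|/ltnW /[dup] ji /subW sWji].
  by rewrite -(glued_res ij) res_comp // => y [].
by rewrite -(glued_res ji) res_comp // => y [].
Qed.

Lemma global_lift : exists s : F setT, g setT s = u.
Proof.
have covX : setT = \bigcup_n W n by rewrite covW.
have [_ glue] := shF openT oW covX.
have [s hs] := glue glued glued_compat.
exists s; apply: (sheaf_eq_cover shF'' openT oW covX) => n.
rewrite -g_res // hs /glued g_res //; case: (lifts n) => t /= ->.
by rewrite res_comp.
Qed.

End GlobalSections.

End ShortExact.

Theorem mainTheorem20 (k : fieldType) (T : topologicalType) :
  locally_weakly_quasi_compact T ->
  (exists Un : nat -> set T,
     (forall n, relcpt (Un n) setT) /\ \bigcup_n Un n = setT) ->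
  (forall F : presheaf k T, is_sheaf F ->
     exists (G : presheaf k T) (phi : morphism F G),
       is_sheaf G /\ c_soft G /\ natural phi /\ mono phi) /\
  (forall (F' F F'' : presheaf k T) (f : morphism F' F) (g : morphism F F''),
     is_sheaf F' -> is_sheaf F -> is_sheaf F'' -> short_exact f g ->
     c_soft F' -> c_soft F -> c_soft F'') /\
  (forall (F' F F'' : presheaf k T) (f : morphism F' F) (g : morphism F F''),
     is_sheaf F' -> is_sheaf F -> is_sheaf F'' -> short_exact f g ->
     c_soft F' ->
     injective (f setT) /\
     (forall s : F setT, g setT s = 0 <-> exists s' : F' setT, f setT s' = s) /\
     (forall u : F'' setT, exists s : F setT, g setT s = u)).
Proof.
move=> LW [U [UX covU]]; split.
  move=> F shF; exists (godement F), (germ_morphism F); split; first exact: godement_sheaf.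
  split; first exact: godement_c_soft.
  by split; [exact: germ_morphism_natural|exact: germ_morphism_mono].
split=> [F' F F'' f g shF' shF shF'' fg csF'|F' F F'' f g shF' shF shF'' fg csF'].
  exact: c_soft_quotient shF' shF shF'' fg LW csF'.
have [W [WX WW covW]] := relcpt_exhaustion LW UX covU.
split; first by apply: (f_inj fg); exact: openT.
split=> [s|u]; last exact: global_lift shF' shF shF'' fg LW csF' W WX WW covW u.
split; first by apply: (ker_g_im_f shF' shF fg); exact: openT.
by case=> s' <-; apply: (gf_eq0 fg); exact: openT.
Qed.
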